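(* Let $W$ be a positive word such that either there exist positive words $A_1,\dots,A_{n-1}$ with $$W\doteq\sigma_1A_1\doteq\sigma_2A_2\doteq\cdots\doteq\sigma_{n-1}A_{n-1},$$ or there exist positive words $B_1,\dots,B_{n-1}$ with $$W\doteq B_1\sigma_1\doteq B_2\sigma_2\doteq\cdots\doteq B_{n-1}\sigma_{n-1}.$$ Then $W\doteq\Delta Z$ for some positive word $Z$.
   Context: Fix $n\ge 2$. The positive singular braid monoid $SB_n^+$ is the monoid with generators $\sigma_1,\dots,\sigma_{n-1},x_1,\dots,x_{n-1}$ and relations: $\sigma_i\sigma_j=\sigma_j\sigma_i$ and $x_ix_j=x_jx_i$ if $|i-j|>1$; $x_i\sigma_j=\sigma_jx_i$ if $|i-j|\ne 1$; $\sigma_i\sigma_{i+1}\sigma_i=\sigma_{i+1}\sigma_i\sigma_{i+1}$; $\sigma_i\sigma_{i+1}x_i=x_{i+1}\sigma_i\sigma_{i+1}$; $\sigma_{i+1}\sigma_ix_{i+1}=x_i\sigma_{i+1}\sigma_i$. A positive word is a word in the letters $\sigma_i,x_i$; $A\doteq B$ means they represent the same element of $SB_n^+$. Garside's fundamental word is $\Delta\equiv\sigma_1\cdots\sigma_{n-1}\,\sigma_1\cdots\sigma_{n-2}\cdots\sigma_1\sigma_2\,\sigma_1$. *)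

From mathcomp Require Import all_boot.
Set Implicit Arguments. Unset Strict Implicit. Unset Printing Implicit Defensive.

(* Letters of the positive singular braid monoid SB_n^+ :
   Sg i stands for sigma_i, X i for x_i (indices are natural numbers,
   meaningful for 1 <= i <= n-1). *)
Inductive letter : Type := Sg of nat | X of nat.

Definition letter_idx (l : letter) : nat := match l with Sg i => i | X i => i end.

Definition valid_idx (n i : nat) : bool := (1 <= i) && (i <= n.-1).

Definition positive_word (n : nat) (w : seq letter) : bool :=
  all (fun l => valid_idx n (letter_idx l)) w.

Definition ndist (i j : nat) : nat := (i - j) + (j - i).

Inductive sb_rel (n : nat) : seq letter -> seq letter -> Prop :=
| R_ss i j : valid_idx n i -> valid_idx n j -> 1 < ndist i j ->
    sb_rel n [:: Sg i; Sg j] [:: Sg j; Sg i]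
| R_xx i j : valid_idx n i -> valid_idx n j -> 1 < ndist i j ->
    sb_rel n [:: X i; X j] [:: X j; X i]
| R_xs i j : valid_idx n i -> valid_idx n j -> ndist i j != 1 ->
    sb_rel n [:: X i; Sg j] [:: Sg j; X i]
| R_braid i : valid_idx n i -> valid_idx n i.+1 ->
    sb_rel n [:: Sg i; Sg i.+1; Sg i] [:: Sg i.+1; Sg i; Sg i.+1]
| R_mix1 i : valid_idx n i -> valid_idx n i.+1 ->
    sb_rel n [:: Sg i; Sg i.+1; X i] [:: X i.+1; Sg i; Sg i.+1]
| R_mix2 i : valid_idx n i -> valid_idx n i.+1 ->
    sb_rel n [:: Sg i.+1; Sg i; X i.+1] [:: X i; Sg i.+1; Sg i].

Inductive sb_equiv (n : nat) : seq letter -> seq letter -> Prop :=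
| E_refl w : sb_equiv n w w
| E_rel p u v s : sb_rel n u v -> sb_equiv n (p ++ u ++ s) (p ++ v ++ s)
| E_sym w1 w2 : sb_equiv n w1 w2 -> sb_equiv n w2 w1
| E_trans w1 w2 w3 : sb_equiv n w1 w2 -> sb_equiv n w2 w3 -> sb_equiv n w1 w3.

(* Garside's fundamental word
   Delta = (s_1 ... s_{n-1}) (s_1 ... s_{n-2}) ... (s_1 s_2) (s_1). *)
Definition delta (n : nat) : seq letter :=
  flatten [seq [seq Sg j | j <- iota 1 k] | k <- rev (iota 1 n.-1)].
Example delta4 : delta 4 = [:: Sg 1; Sg 2; Sg 3; Sg 1; Sg 2; Sg 1].
Proof. by []. Qed.

From HB Require Import structures.
From mathcomp Require Import all_boot zify.
From Stdlib Require Import Setoid Morphisms.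

Set Implicit Arguments.
Unset Strict Implicit.
Unset Printing Implicit Defensive.

(* Let f be the complement of SB_n^+: a f(a,b) = b f(b,a) is the defining
   relation between the letters a and b, and f(x_i, x_(i+-1)) is undefined.
   It satisfies Dehornoy's cube condition, hence every equality a A = b B of
   positive words goes through it: A = f(a,b) C and B = f(b,a) C.  This is
   proved by induction on the length of A and then on the derivation of the
   equality, the transitivity step being the cube condition for three letters
   (together with right reversing, which is sound below the current length).
   Whether the cube condition holds for three letters depends only on the
   equalities and adjacencies among their indices, so it is checked by
   computation on letters with indices 1..5.

   Consequently Delta_(k+1) = Delta_k s_k ... s_1 is the least common right
   multiple of Delta_k and s_k, and a positive word left divisible by every s_i
   is left divisible by Delta.  The right-handed case follows by reversing
   words, an anti-automorphism that fixes Delta, and by the quasi-centrality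
   Y Delta = Delta tau(Y), where tau replaces every index i by n - i. *)

Definition letter_eqb (a b : letter) : bool :=
  match a, b with
  | Sg i, Sg j | X i, X j => i == j
  | _, _ => false
  end.

Lemma letter_eqP : Equality.axiom letter_eqb.
Proof.
by case=> i [] j /=; try (by constructor); apply: (iffP eqP) => [->|[]].
Qed.

HB.instance Definition _ := hasDecEq.Build letter letter_eqP.

Lemma eqv_ctx n p s u v :
  sb_equiv n u v -> sb_equiv n (p ++ u ++ s) (p ++ v ++ s).
Proof.
elim=> [w|p' u' v' s' r|w1 w2 _ IH|w1 w2 w3 _ IH1 _ IH2].
- exact: E_refl.
- have cat_ctx w : p ++ (p' ++ w ++ s') ++ s = (p ++ p') ++ w ++ s' ++ s.
    by rewrite !catA.
  by rewrite !cat_ctx; apply: E_rel.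
- exact: E_sym.
- exact: E_trans IH2.
Qed.

Add Parametric Relation n : (seq letter) (sb_equiv n)
  reflexivity proved by (@E_refl n)
  symmetry proved by (@E_sym n)
  transitivity proved by (@E_trans n)
  as sb_equiv_rel.

Local Hint Resolve E_refl : core.

Add Parametric Morphism n : (@cat letter)
  with signature sb_equiv n ==> sb_equiv n ==> sb_equiv n as cat_eqv.
Proof.
move=> u1 v1 e1 u2 v2 e2; transitivity (v1 ++ u2).
- exact: (eqv_ctx [::] u2 e1).
- by have := eqv_ctx v1 [::] e2; rewrite !cats0.
Qed.

Add Parametric Morphism n : (@cons letter)
  with signature eq ==> sb_equiv n ==> sb_equiv n as cons_eqv.
Proof. by move=> a u v e; rewrite -(cat1s a u) -(cat1s a v) e. Qed.

Lemma rel_eqv n u v : sb_rel n u v -> sb_equiv n u v.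
Proof. by move=> r; have := E_rel [::] [::] r; rewrite /= !cats0. Qed.

Lemma eqv_size n u v : sb_equiv n u v -> size u = size v.
Proof.
elim=> [//|p u' v' s r|w1 w2 _ ->|w1 w2 w3 _ -> _ ->] //.
by rewrite !size_cat; case: r.
Qed.

Lemma positive_word_cat n u v :
  positive_word n (u ++ v) = positive_word n u && positive_word n v.
Proof. exact: all_cat. Qed.

Lemma positive_word_cons n a w :
  positive_word n (a :: w) = valid_idx n (letter_idx a) && positive_word n w.
Proof. by []. Qed.

Lemma eqv_positive n u v : sb_equiv n u v -> positive_word n u = positive_word n v.
Proof.
elim=> [//|p u' v' s r|w1 w2 _ ->|w1 w2 w3 _ -> _ ->] //.
rewrite !positive_word_cat; suff [-> ->] : positive_word n u' /\ positive_word n v' by [].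
by case: r => [i j hi hj _|i j hi hj _|i j hi hj _|i hi hj|i hi hj|i hi hj];
  rewrite /positive_word /= ?hi ?hj.
Qed.

(** * Complements and right reversing *)

Definition adj (i j : nat) : bool := (i.+1 == j) || (j.+1 == i).

Lemma adjC i j : adj i j = adj j i.
Proof. exact: orbC. Qed.

Lemma ndistC i j : ndist i j = ndist j i.
Proof. exact: addnC. Qed.

Lemma ndist_gt1E i j : (1 < ndist i j) = (i != j) && ~~ adj i j.
Proof. rewrite /ndist /adj; apply/idP/idP; lia. Qed.

Lemma ndist_neq1E i j : (ndist i j != 1) = ~~ adj i j.
Proof. rewrite /ndist /adj; apply/idP/idP; lia. Qed.

(* [compl a b = Some p] and [compl b a = Some q] when a p = b q is the defining
   relation starting with a and b (the trivial one if a = b); no relation starts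
   with x_i on one side and x_(i+-1) on the other. *)
Definition compl (a b : letter) : option (seq letter) :=
  match a, b with
  | Sg i, Sg j =>
      if i == j then Some [::] else if adj i j then Some [:: Sg j; Sg i] else Some [:: Sg j]
  | X i, X j => if i == j then Some [::] else if adj i j then None else Some [:: X j]
  | X i, Sg j => if adj i j then Some [:: Sg j; Sg i] else Some [:: Sg j]
  | Sg i, X j => if adj i j then Some [:: Sg j; X i] else Some [:: X j]
  end.

Lemma compl_refl a : compl a a = Some [::].
Proof. by case: a => i /=; rewrite eqxx. Qed.

Lemma rel_compl n a u b v :
  sb_rel n (a :: u) (b :: v) -> compl a b = Some u /\ compl b a = Some v.
Proof.
move Eu: (a :: u) => u0; move Ev: (b :: v) => v0 r.
case: r Eu Ev => [i j _ _ d|i j _ _ d|i j _ _ d|i _ _|i _ _|i _ _] [-> ->] [-> ->] /=.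
- by move: d; rewrite ndist_gt1E => /andP[/negbTE ne /negbTE na]; rewrite ne na eq_sym ne adjC na.
- by move: d; rewrite ndist_gt1E => /andP[/negbTE ne /negbTE na]; rewrite ne na eq_sym ne adjC na.
- by move: d; rewrite ndist_neq1E => /negbTE na; rewrite na adjC na.
- by rewrite (ltn_eqF (ltnSn i)) (gtn_eqF (ltnSn i)) /adj !eqxx orbT.
- by rewrite /adj !eqxx orbT.
- by rewrite /adj !eqxx orbT.
Qed.

Definition factors_through_compl n a A b B : Prop :=
  exists p q C, [/\ compl a b = Some p, compl b a = Some q,
    sb_equiv n A (p ++ C) & sb_equiv n B (q ++ C)].

Definition through_compl n d : Prop :=
  forall a A b B, size A = d -> positive_word n (a :: A) ->
  sb_equiv n (a :: A) (b :: B) -> factors_through_compl n a A b B.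

Definition bounded_word n d w : bool := (size w <= d) && positive_word n w.

Lemma bounded_word_suffix n d u w : bounded_word n d (u ++ w) -> bounded_word n d w.
Proof.
rewrite /bounded_word size_cat positive_word_cat => /andP[sz /andP[_ ->]].
by rewrite (leq_trans (leq_addl _ _) sz).
Qed.

Lemma eqv_bounded_word n d u v :
  sb_equiv n u v -> bounded_word n d u = bounded_word n d v.
Proof. by move=> e; rewrite /bounded_word (eqv_size e) (eqv_positive e). Qed.

Lemma bounded_word_eqv_suffix n d u v w :
  bounded_word n d u -> sb_equiv n u (v ++ w) -> bounded_word n d w.
Proof.
by move=> bd e; apply: (bounded_word_suffix (u := v)); rewrite -(eqv_bounded_word _ e).
Qed.

Definition compl_pair n d u v u' v' : Prop :=
  forall R C, bounded_word n d (u ++ R) -> sb_equiv n (u ++ R) (v ++ C) ->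
  exists2 D, sb_equiv n R (u' ++ D) & sb_equiv n C (v' ++ D).

Definition no_common_multiple n d u v : Prop :=
  forall R C, bounded_word n d (u ++ R) -> ~ sb_equiv n (u ++ R) (v ++ C).

Lemma compl_pair_nill n d v : compl_pair n d [::] v v [::].
Proof. by move=> R C _ e; exists C. Qed.

Lemma compl_pair_nilr n d u : compl_pair n d u [::] [::] u.
Proof. by move=> R C _ e; exists R; last symmetry. Qed.

Lemma compl_pair_catl n d u1 u2 v u1' v1 u2' w :
  compl_pair n d u1 v u1' v1 -> compl_pair n d u2 u1' u2' w ->
  compl_pair n d (u1 ++ u2) v u2' (v1 ++ w).
Proof.
move=> P1 P2 R C; rewrite -catA => bd e.
have [D eR eC] := P1 _ _ bd e.
have [E eR' eD] := P2 _ _ (bounded_word_suffix bd) eR.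
by exists E; rewrite // eC eD catA.
Qed.

Lemma compl_pair_catr n d u v1 v2 u1 v1' v2' w :
  compl_pair n d u v1 u1 v1' -> compl_pair n d v2 v1' v2' w ->
  compl_pair n d u (v1 ++ v2) (u1 ++ w) v2'.
Proof.
move=> P1 P2 R C bd; rewrite -catA => e.
have [D eR eC] := P1 _ _ bd e.
have [E eC' eD] := P2 _ _ (bounded_word_eqv_suffix bd e) eC.
by exists E; rewrite // eR eD catA.
Qed.

Lemma no_common_multiple_cat n d u v w :
  no_common_multiple n d u v -> no_common_multiple n d u (v ++ w).
Proof. by move=> N R C bd; rewrite -catA; apply: N. Qed.

Lemma no_common_multiple_catl n d u1 u2 v u1' v1 :
  compl_pair n d u1 v u1' v1 -> no_common_multiple n d u2 u1' ->
  no_common_multiple n d (u1 ++ u2) v.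
Proof.
move=> P1 N2 R C; rewrite -catA => bd e.
have [D eR _] := P1 _ _ bd e.
exact: N2 _ _ (bounded_word_suffix bd) eR.
Qed.

Lemma no_common_multiple_catr n d u v1 v2 u1 v1' :
  compl_pair n d u v1 u1 v1' -> no_common_multiple n d v2 v1' ->
  no_common_multiple n d u (v1 ++ v2).
Proof.
move=> P1 N2 R C bd; rewrite -catA => e.
have [D _ eC] := P1 _ _ bd e.
exact: N2 _ _ (bounded_word_eqv_suffix bd e) eC.
Qed.

Inductive reversal := RevFail | RevOk of seq letter & seq letter.

(* Right reversing of u^-1 v with the complement [compl]; [RevFail] means that
   an undefined complement was met, [None] that the fuel ran out. *)
Fixpoint reverse (fuel : nat) (u v : seq letter) : option reversal :=
  match u, v with
  | [::], _ => Some (RevOk v [::])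
  | _, [::] => Some (RevOk [::] u)
  | a :: u0, b :: v0 =>
    if fuel is fuel'.+1 then
      match compl a b, compl b a with
      | Some p, Some q =>
        match reverse fuel' u0 p with
        | Some (RevOk u1 p1) =>
          match reverse fuel' v0 (q ++ p1) with
          | Some (RevOk v1 w) => Some (RevOk (u1 ++ w) v1)
          | r => r
          end
        | r => r
        end
      | _, _ => Some RevFail
      end
    else None
  end.

Section Reversing.

Variables n d : nat.
Hypothesis IH : forall d', d' < d -> through_compl n d'.

Definition reversal_spec u v r : Prop :=
  if r is RevOk u' v' then compl_pair n d u v u' v' else no_common_multiple n d u v.

Lemma factors_through_compl_bounded a R b C :
  bounded_word n d (a :: R) -> sb_equiv n (a :: R) (b :: C) ->
  factors_through_compl n a R b C.
Proof. by case/andP=> sz pos; apply: IH sz _ _ _ _ erefl pos. Qed.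

Lemma compl_pair_letter a b p q :
  compl a b = Some p -> compl b a = Some q -> compl_pair n d [:: a] [:: b] p q.
Proof.
move=> hp hq R C bd e.
have [p' [q' [D [hp' hq' eR eC]]]] := factors_through_compl_bounded bd e.
by exists D; congruence.
Qed.

Lemma reverse_sound fuel u v r : reverse fuel u v = Some r -> reversal_spec u v r.
Proof.
elim: fuel u v r => [|fuel IHf] [|a u] [|b v] r //=;
  try by move=> /Some_inj <-; first [exact: compl_pair_nill | exact: compl_pair_nilr].
have compl_fail : compl a b = None \/ compl b a = None ->
    no_common_multiple n d (a :: u) (b :: v).
  move=> Hn R C bd e; have [? [? [? [Hp Hq _ _]]]] := factors_through_compl_bounded bd e.
  by rewrite Hp Hq in Hn; case: Hn.
case Hab: (compl a b) => [p|]; last by case=> <-; apply: compl_fail; left.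
case Hba: (compl b a) => [q|]; last by case=> <-; apply: compl_fail; right.
have L := compl_pair_letter Hab Hba.
case E1: (reverse fuel u p) => [[|u1 p1]|] //.
  case=> <-; apply: (no_common_multiple_cat (v := [:: b])).
  exact: (no_common_multiple_catl (u1 := [:: a])) L (IHf _ _ _ E1).
have L1 : compl_pair n d (a :: u) [:: b] u1 (q ++ p1).
  exact: (compl_pair_catl (u1 := [:: a])) L (IHf _ _ _ E1).
case E2: (reverse fuel v (q ++ p1)) => [[|v1 w]|] // [<-].
  exact: (no_common_multiple_catr (v1 := [:: b])) L1 (IHf _ _ _ E2).
exact: (compl_pair_catr (v1 := [:: b])) L1 (IHf _ _ _ E2).
Qed.

End Reversing.

(** * Bounded search for equivalent words *)

Definition swap_rel n (a b : letter) : bool :=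
  match a, b with
  | Sg i, Sg j | X i, X j => [&& valid_idx n i, valid_idx n j & 1 < ndist i j]
  | X i, Sg j | Sg j, X i => [&& valid_idx n i, valid_idx n j & ndist i j != 1]
  end.

Definition triple_rel n (w : seq letter) : option (seq letter) :=
  match w with
  | [:: Sg i; Sg j; Sg k] =>
      if [&& i == k, adj i j, valid_idx n i & valid_idx n j]
      then Some [:: Sg j; Sg i; Sg j] else None
  | [:: Sg i; Sg j; X k] =>
      if [&& k == i, adj i j, valid_idx n i & valid_idx n j]
      then Some [:: X j; Sg i; Sg j] else None
  | [:: X k; Sg i; Sg j] =>
      if [&& k == j, adj i j, valid_idx n i & valid_idx n j]
      then Some [:: Sg i; Sg j; X i] else None
  | _ => None
  end.

Lemma swap_rel_eqv n a b : swap_rel n a b -> sb_equiv n [:: a; b] [:: b; a].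
Proof.
case: a b => i [] j /= /and3P[hi hj d].
- exact/rel_eqv/R_ss.
- by symmetry; apply/rel_eqv/R_xs.
- exact/rel_eqv/R_xs.
- exact/rel_eqv/R_xx.
Qed.

Lemma triple_rel_eqv n w v : triple_rel n w = Some v -> sb_equiv n w v.
Proof.
case: w => [|[] i [|[] j [|[] k [|]]]] //=;
  case: ifP => // /and4P[/eqP-> /orP[]/eqP<- hi hj] [<-].
- exact/rel_eqv/R_braid.
- by symmetry; apply/rel_eqv/R_braid.
- exact/rel_eqv/R_mix1.
- exact/rel_eqv/R_mix2.
- by symmetry; apply/rel_eqv/R_mix1.
- by symmetry; apply/rel_eqv/R_mix2.
Qed.

Definition head_rewrites n (w : seq letter) : seq (seq letter) :=
  (if w is a :: b :: r then if swap_rel n a b then [:: b :: a :: r] else [::] else [::])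
  ++ (if w is a :: b :: c :: r then
        if triple_rel n [:: a; b; c] is Some v then [:: v ++ r] else [::]
      else [::]).

Fixpoint rewrites n (w : seq letter) : seq (seq letter) :=
  head_rewrites n w ++ (if w is a :: w' then map (cons a) (rewrites n w') else [::]).

Fixpoint reach n k (S : seq (seq letter)) : seq (seq letter) :=
  if k is k'.+1 then reach n k' (undup (S ++ flatten (map (rewrites n) S))) else S.

Lemma head_rewrites_eqv n w w' : w' \in head_rewrites n w -> sb_equiv n w w'.
Proof.
rewrite mem_cat => /orP[].
  case: w => [|a [|b r]] //; case: ifP => // ab; rewrite inE => /eqP->.
  by rewrite -(cat0s r) -!cat_cons (swap_rel_eqv ab).
case: w => [|a [|b [|c r]]] //; case E: triple_rel => [v|] //; rewrite inE => /eqP->.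
by rewrite -(cat0s r) -!cat_cons (triple_rel_eqv E).
Qed.

Lemma rewrites_eqv n w w' : w' \in rewrites n w -> sb_equiv n w w'.
Proof.
elim: w w' => [|a w IHw] w' //=; rewrite mem_cat => /orP[/head_rewrites_eqv //|].
by case/mapP=> x /IHw e ->; rewrite e.
Qed.

Lemma reach_eqv n k w0 S : {in S, forall w, sb_equiv n w0 w} ->
  {in reach n k S, forall w, sb_equiv n w0 w}.
Proof.
elim: k S => [|k IHk] S HS //=; apply: IHk => w.
rewrite mem_undup mem_cat => /orP[/HS //|/flattenP[ws /mapP[x Sx ->] /rewrites_eqv e]].
by rewrite (HS _ Sx).
Qed.

Definition search_depth := 6.

Definition common_tail n w1 u w2 v : bool :=
  has (fun w => (take (size u) w == u)
                && (v ++ drop (size u) w \in reach n search_depth [:: w2]))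
      (reach n search_depth [:: w1]).

Lemma reach_from_eqv n w w' : w' \in reach n search_depth [:: w] -> sb_equiv n w w'.
Proof. by apply: reach_eqv => x; rewrite inE => /eqP->. Qed.

Lemma common_tailP n w1 u w2 v : common_tail n w1 u w2 v ->
  exists t, sb_equiv n w1 (u ++ t) /\ sb_equiv n w2 (v ++ t).
Proof.
case/hasP=> w /reach_from_eqv e1 /andP[/eqP hu /reach_from_eqv e2].
by exists (drop (size u) w); rewrite -{1}hu cat_take_drop.
Qed.

(** * Relabelling indices *)

Definition relabel (psi : nat -> nat) (l : letter) : letter :=
  match l with Sg i => Sg (psi i) | X i => X (psi i) end.

Definition indices_in (S : seq nat) (w : seq letter) : bool :=
  all (fun l => letter_idx l \in S) w.

Lemma indices_in_cat S u v : indices_in S (u ++ v) = indices_in S u && indices_in S v.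
Proof. exact: all_cat. Qed.

Lemma compl_indices S a b p : compl a b = Some p ->
  letter_idx a \in S -> letter_idx b \in S -> indices_in S p.
Proof.
by case: a b => i [] j /=; repeat case: ifP => _; move=> // [<-] ha hb; rewrite /= ?ha ?hb.
Qed.

Lemma reverse_indices S fuel u v u' v' : reverse fuel u v = Some (RevOk u' v') ->
  indices_in S u -> indices_in S v -> indices_in S u' && indices_in S v'.
Proof.
elim: fuel u v u' v' => [|fuel IHf] [|a u] [|b v] u' v' //=;
  try by move=> /Some_inj[<- <-] Su Sv; apply/andP.
move=> E /andP[Sa Su] /andP[Sb Sv]; move: E.
case Hab: (compl a b) => [p|] //; case Hba: (compl b a) => [q|] //.
have Sp := compl_indices Hab Sa Sb; have Sq := compl_indices Hba Sb Sa.
case E1: (reverse fuel u p) => [[|u1 p1]|] //.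
have /andP[Su1 Sp1] := IHf _ _ _ _ E1 Su Sp.
case E2: (reverse fuel v (q ++ p1)) => [[|v1 w]|] // [<- <-].
have Sqp1 : indices_in S (q ++ p1) by rewrite indices_in_cat Sq Sp1.
have /andP[Sv1 Sw] := IHf _ _ _ _ E2 Sv Sqp1.
by rewrite indices_in_cat Su1 Sw Sv1.
Qed.

Lemma rel_indices S m u v : sb_rel m u v -> indices_in S u = indices_in S v.
Proof.
by case=> [i j|i j|i j|i|i|i] *; rewrite /indices_in /=;
  case: (i \in S); rewrite ?andbF //; case: (_ \in S).
Qed.

Lemma eqv_indices S m u v : sb_equiv m u v -> indices_in S u = indices_in S v.
Proof.
elim=> [//|p u' v' s r|w1 w2 _ ->|w1 w2 w3 _ -> _ ->] //.
by rewrite !indices_in_cat (rel_indices S r).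
Qed.

Definition index_embedding (psi : nat -> nat) (S : seq nat) : Prop :=
  {in S &, forall i j, (psi i == psi j) = (i == j) /\ ((psi i).+1 == psi j) = (i.+1 == j)}.

Definition relabel_reversal psi (r : reversal) : reversal :=
  if r is RevOk u v then RevOk (map (relabel psi) u) (map (relabel psi) v) else RevFail.

Section Relabel.

Variables (psi : nat -> nat) (S : seq nat).
Hypothesis psi_emb : index_embedding psi S.

Lemma eq_relabel i j : i \in S -> j \in S -> (psi i == psi j) = (i == j).
Proof. by move=> Si Sj; rewrite (psi_emb Si Sj).1. Qed.

Lemma adj_relabel i j : i \in S -> j \in S -> adj (psi i) (psi j) = adj i j.
Proof. by move=> Si Sj; rewrite /adj (psi_emb Si Sj).2 (psi_emb Sj Si).2. Qed.

Lemma compl_relabel a b : letter_idx a \in S -> letter_idx b \in S ->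
  compl (relabel psi a) (relabel psi b) = omap (map (relabel psi)) (compl a b).
Proof.
by case: a b => i [] j /= Si Sj; rewrite adj_relabel ?eq_relabel //; repeat case: ifP.
Qed.

Lemma reverse_relabel fuel u v : indices_in S u -> indices_in S v ->
  reverse fuel (map (relabel psi) u) (map (relabel psi) v)
  = omap (relabel_reversal psi) (reverse fuel u v).
Proof.
elim: fuel u v => [|fuel IHf] [|a u] [|b v] //= /andP[Sa Su] /andP[Sb Sv].
rewrite (compl_relabel Sa Sb) (compl_relabel Sb Sa).
case Hab: (compl a b) => [p|] //; case Hba: (compl b a) => [q|] //=.
have Sp := compl_indices Hab Sa Sb; have Sq := compl_indices Hba Sb Sa.
rewrite IHf //; case E1: (reverse fuel u p) => [[|u1 p1]|] //=.
have /andP[_ Sp1] := reverse_indices E1 Su Sp.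
have Sqp1 : indices_in S (q ++ p1) by rewrite indices_in_cat Sq Sp1.
rewrite -map_cat IHf //; case: (reverse fuel v (q ++ p1)) => [[|v1 w]|] //=.
by rewrite map_cat.
Qed.

Variable n : nat.
Hypothesis psi_valid : {in S, forall i, valid_idx n (psi i)}.

Lemma rel_relabel m u v : indices_in S u -> sb_rel m u v ->
  sb_rel n (map (relabel psi) u) (map (relabel psi) v).
Proof.
move=> Su r; case: r Su => [i j _ _ d|i j _ _ d|i j _ _ d|i _ _|i _ _|i _ _];
  rewrite /indices_in /= ?andbT.
- case/andP=> Si Sj; apply: R_ss; rewrite ?psi_valid //.
  by rewrite ndist_gt1E eq_relabel // adj_relabel // -ndist_gt1E.
- case/andP=> Si Sj; apply: R_xx; rewrite ?psi_valid //.
  by rewrite ndist_gt1E eq_relabel // adj_relabel // -ndist_gt1E.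
- case/andP=> Si Sj; apply: R_xs; rewrite ?psi_valid //.
  by rewrite ndist_neq1E adj_relabel // -ndist_neq1E.
all: case/and3P=> S1 S2 _; have [Si Si1] : i \in S /\ i.+1 \in S by [].
all: case: (psi_emb Si Si1) => _; rewrite eqxx => /eqP psiS.
all: rewrite -psiS; first [apply: R_braid | apply: R_mix1 | apply: R_mix2];
  by rewrite ?psiS psi_valid.
Qed.

Lemma eqv_relabel m w1 w2 : sb_equiv m w1 w2 -> indices_in S w1 ->
  sb_equiv n (map (relabel psi) w1) (map (relabel psi) w2).
Proof.
elim=> [//|p u v s r|u v e IHe|u v w e1 IH1 e2 IH2] Sw.
- move: Sw; rewrite !indices_in_cat => /and3P[_ Su _].
  by rewrite !map_cat; apply/E_rel/(rel_relabel Su r).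
- by symmetry; apply: IHe; rewrite (eqv_indices S e).
- by rewrite IH1 // IH2 // -(eqv_indices S e1).
Qed.

End Relabel.

Section Compression.

Variable T : seq nat.

Definition gap_weight (y : nat) : nat := if y.+1 \in T then 1 else 2.

(* Renumbers the elements of T increasingly from 1, keeping consecutive elements
   consecutive and turning every larger gap into a gap of two. *)
Definition compress (x : nat) : nat := (\sum_(0 <= y < x | y \in T) gap_weight y).+1.

Definition expand (y : nat) : nat := nth 0 T (index y (map compress T)).

Lemma gap_weight_gt0 y : 0 < gap_weight y.
Proof. by rewrite /gap_weight; case: ifP. Qed.

Lemma compressD x y : x <= y ->
  compress y = compress x + \sum_(x <= z < y | z \in T) gap_weight z.
Proof.
by move=> le_xy; rewrite /compress (@big_cat_nat _ _ _ x 0 y _ _ (leq0n x) le_xy) addSn.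
Qed.

Lemma compress_ltn x y : x \in T -> x < y -> compress x < compress y.
Proof.
move=> Tx lt_xy; rewrite (compressD (ltnW lt_xy)) big_ltn_cond // Tx.
by rewrite /= -[X in X < _]addn0 ltn_add2l addn_gt0 gap_weight_gt0.
Qed.

Lemma compress_inj : {in T &, injective compress}.
Proof.
move=> x y Tx Ty; case: (ltngtP x y) => [lt_xy|lt_yx|//] E.
- by move: (compress_ltn Tx lt_xy); rewrite E ltnn.
- by move: (compress_ltn Ty lt_yx); rewrite E ltnn.
Qed.

Lemma compress_succ x y : x \in T -> y \in T ->
  ((compress x).+1 == compress y) = (x.+1 == y).
Proof.
move=> Tx Ty; case: (ltngtP x y) => [lt_xy|lt_yx|<-]; last first.
- by rewrite (gtn_eqF (ltnSn _)) (gtn_eqF (ltnSn _)).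
- by have := compress_ltn Ty lt_yx => ?; apply/idP/idP => /eqP; lia.
rewrite (compressD (ltnW lt_xy)) big_ltn_cond // Tx.
move: lt_xy; rewrite leq_eqVlt => /orP[/eqP Ey|lt_x1y].
  by subst y; rewrite big_geq // /gap_weight Ty addn0 addn1 !eqxx.
have ge2 : 2 <= gap_weight x + \sum_(x.+1 <= z < y | z \in T) gap_weight z.
  rewrite big_ltn_cond // {1}/gap_weight; case: ifP => // _.
  by rewrite add1n ltnS addn_gt0 gap_weight_gt0.
by apply/idP/idP => /eqP; lia.
Qed.

Lemma compress_le x : x \in T -> compress x <= (size T).*2.-1.
Proof.
move=> Tx; set c := count (fun y => y \in T) (iota 0 x).
have le_sum : \sum_(0 <= y < x | y \in T) gap_weight y <= c * 2.
  rewrite mulnC -iter_addn_0 -big_const_seq /index_iota subn0.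
  by apply: leq_sum => y _; rewrite /gap_weight; case: ifP.
have lt_c : c < size T.
  rewrite /c -size_filter; apply: (uniq_leq_size (s1 := x :: filter (mem T) (iota 0 x))).
    by rewrite /= filter_uniq ?iota_uniq // andbT mem_filter mem_iota ltnn !andbF.
  by move=> y; rewrite inE mem_filter => /orP[/eqP->|/andP[]].
rewrite /compress; lia.
Qed.

Lemma compressK : {in T, cancel compress expand}.
Proof. by move=> x Tx; apply: nth_index_map compress_inj Tx. Qed.

Lemma index_embedding_expand : index_embedding expand (map compress T).
Proof.
move=> _ _ /mapP[x Tx ->] /mapP[y Ty ->]; rewrite !compressK //.
by rewrite (inj_in_eq compress_inj) // compress_succ.
Qed.

End Compression.

Lemma relabel_compressK (T : seq nat) l : letter_idx l \in T ->
  relabel (expand T) (relabel (compress T) l) = l.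
Proof. by case: l => i /= Ti; rewrite compressK. Qed.

(** * The cube condition *)

Definition cube_letters : seq letter :=
  [seq Sg i | i <- iota 1 5] ++ [seq X i | i <- iota 1 5].

Lemma relabel_compress_cube_letters (T : seq nat) l : size T <= 3 -> letter_idx l \in T ->
  relabel (compress T) l \in cube_letters.
Proof.
move=> sz Tl; have inI : compress T (letter_idx l) \in iota 1 5.
  by have := compress_le Tl; rewrite mem_iota -mul2n /compress; lia.
by case: l Tl inI => i /= _ inI; rewrite mem_cat map_f ?orbT.
Qed.

Definition reversing_fuel := 10.

(* Dehornoy's cube condition for a, b and the pivot c: the common multiples of
   a and b obtained by reversing their complements with c go through the
   complement of a and b, as found by bounded search. *)
Definition cube_ok n a b c : bool :=
  match compl a c, compl c a, compl c b, compl b c with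
  | Some p, Some q, Some r, Some s =>
    match reverse reversing_fuel q r with
    | Some RevFail => true
    | Some (RevOk q' r') =>
      if (compl a b, compl b a) is (Some u, Some v)
      then common_tail n (p ++ q') u (s ++ r') v else false
    | None => false
    end
  | _, _, _, _ => true
  end.

Lemma cube_ok_cube_letters :
  all (fun a => all (fun b => all (cube_ok 6 a b) cube_letters) cube_letters) cube_letters.
Proof. by vm_compute. Qed.

Definition cube_property n d a b c : Prop :=
  forall p q r s C1 C2, compl a c = Some p -> compl c a = Some q ->
  compl c b = Some r -> compl b c = Some s ->
  bounded_word n d (q ++ C1) -> sb_equiv n (q ++ C1) (r ++ C2) ->
  factors_through_compl n a (p ++ C1) b (s ++ C2).

Section CubeProperty.

Variables n d : nat.
Hypothesis IH : forall d', d' < d -> through_compl n d'.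

Lemma cube_ok_relabel psi S a b c :
  index_embedding psi S -> {in S, forall i, valid_idx n (psi i)} ->
  letter_idx a \in S -> letter_idx b \in S -> letter_idx c \in S ->
  cube_ok 6 a b c ->
  cube_property n d (relabel psi a) (relabel psi b) (relabel psi c).
Proof.
move=> emb val Sa Sb Sc + p q r s C1 C2; rewrite /cube_ok !(compl_relabel emb) //.
case: (compl a c) (@compl_indices S a c) => [p0 /(_ _ erefl Sa Sc) Sp0|] //.
case: (compl c a) (@compl_indices S c a) => [q0 /(_ _ erefl Sc Sa) Sq0|] //.
case: (compl c b) (@compl_indices S c b) => [r0 /(_ _ erefl Sc Sb) Sr0|] //.
case: (compl b c) (@compl_indices S b c) => [s0 /(_ _ erefl Sb Sc) Ss0|] //.
move=> + [<-] [<-] [<-] [<-] bd e.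
have Erel := reverse_relabel emb reversing_fuel Sq0 Sr0.
case E: (reverse reversing_fuel q0 r0) Erel => [[|q' r']|] // Erel.
  by case: (reverse_sound IH (r := RevFail) Erel _ _ bd e).
have /andP[Sq' Sr'] := reverse_indices E Sq0 Sr0.
have [D eC1 eC2] := reverse_sound IH
  (r := RevOk (map (relabel psi) q') (map (relabel psi) r')) Erel _ _ bd e.
case Hab: (compl a b) => [u0|] //; case Hba: (compl b a) => [v0|] //.
case/common_tailP=> t0 [e1 e2].
have Sp0q' : indices_in S (p0 ++ q') by rewrite indices_in_cat Sp0.
have Ss0r' : indices_in S (s0 ++ r') by rewrite indices_in_cat Ss0.
exists (map (relabel psi) u0), (map (relabel psi) v0), (map (relabel psi) t0 ++ D).
split; rewrite ?(compl_relabel emb) ?Hab ?Hba //.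
- by rewrite eC1 catA -map_cat (eqv_relabel emb val e1 Sp0q') map_cat catA.
- by rewrite eC2 catA -map_cat (eqv_relabel emb val e2 Ss0r') map_cat catA.
Qed.

Lemma cube_property_valid a b c :
  valid_idx n (letter_idx a) -> valid_idx n (letter_idx b) ->
  valid_idx n (letter_idx c) -> cube_property n d a b c.
Proof.
(* Three indices compress into 1..5, all of which are valid in SB_6^+. *)
move=> va vb vc; set T := [:: letter_idx a; letter_idx b; letter_idx c].
have Ta : letter_idx a \in T by rewrite !inE eqxx.
have Tb : letter_idx b \in T by rewrite !inE eqxx orbT.
have Tc : letter_idx c \in T by rewrite !inE eqxx !orbT.
have val : {in map (compress T) T, forall i, valid_idx n (expand T i)}.
  by move=> _ /mapP[x Tx ->]; rewrite compressK //; move: Tx; rewrite !inE => /or3P[] /eqP->.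
have Sl l : letter_idx l \in T -> letter_idx (relabel (compress T) l) \in map (compress T) T.
  by case: l => i Ti; exact: (map_f (compress T) Ti).
have ok : cube_ok 6 (relabel (compress T) a) (relabel (compress T) b) (relabel (compress T) c).
  have cube l : letter_idx l \in T -> relabel (compress T) l \in cube_letters.
    exact: relabel_compress_cube_letters.
  exact: (allP (allP (allP cube_ok_cube_letters _ (cube _ Ta)) _ (cube _ Tb)) _ (cube _ Tc)).
have := cube_ok_relabel (@index_embedding_expand T) val (Sl _ Ta) (Sl _ Tb) (Sl _ Tc) ok.
by rewrite !relabel_compressK.
Qed.

End CubeProperty.

Lemma factors_through_compl_sym n a A b B :
  factors_through_compl n a A b B -> factors_through_compl n b B a A.
Proof. by case=> p [q [C [? ? ? ?]]]; exists q, p, C. Qed.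

Lemma factors_through_compl_refl n a A B :
  sb_equiv n A B -> factors_through_compl n a A a B.
Proof. by move=> e; exists [::], [::], B; rewrite compl_refl. Qed.

Lemma factors_through_compl_rel n p u v s a A b B :
  sb_rel n u v -> p ++ u ++ s = a :: A -> p ++ v ++ s = b :: B ->
  factors_through_compl n a A b B.
Proof.
case: p => [|x p] r /=; last by case=> <- <- [<- <-]; apply/factors_through_compl_refl/E_rel.
have [a' [u' [b' [v' [Eu Ev]]]]] : exists a' u' b' v', u = a' :: u' /\ v = b' :: v'.
  by case: r => *; do 4 eexists.
move: r; rewrite Eu Ev => /rel_compl[hu hv] [<- <-] [<- <-].
by exists u', v', s.
Qed.

Lemma cube_step n d a A c U b B :
  (forall d', d' < d -> through_compl n d') -> size U = d ->
  valid_idx n (letter_idx a) -> valid_idx n (letter_idx b) ->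
  positive_word n (c :: U) ->
  factors_through_compl n a A c U -> factors_through_compl n c U b B ->
  factors_through_compl n a A b B.
Proof.
move=> IH szU va vb /andP[vc posU].
move=> [p [q [C1 [Hac Hca eA eU1]]]] [r [s [C2 [Hcb Hbc eU2 eB]]]].
have bd : bounded_word n d (q ++ C1).
  by rewrite -(eqv_bounded_word _ eU1) /bounded_word szU leqnn.
have [u [v [t [Hab Hba e1 e2]]]] :=
  cube_property_valid IH va vb vc Hac Hca Hcb Hbc bd (E_trans (E_sym eU1) eU2).
by exists u, v, t; split; rewrite // ?eA ?eB.
Qed.

Theorem through_compl_all n d : through_compl n d.
Proof.
elim/ltn_ind: d => d IH.
suff factors : forall w1 w2, sb_equiv n w1 w2 -> forall a A b B,
    w1 = a :: A -> w2 = b :: B -> size A = d -> positive_word n w1 ->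
    factors_through_compl n a A b B.
  by move=> a A b B szA pos e; apply: factors e _ _ _ _ erefl erefl szA pos.
move=> w1 w2; elim=> [w|p u v s r|v u e IHe|u v w e1 IH1 e2 IH2] a A b B Eu Ev szA pos.
- by move: Ev; rewrite Eu => -[<- <-]; apply: factors_through_compl_refl.
- exact: factors_through_compl_rel r Eu Ev.
- have szB : size B = d by rewrite -szA; have := eqv_size e; rewrite Eu Ev => -[].
  apply/factors_through_compl_sym/IHe => //.
  by rewrite (eqv_positive e).
have [c [U Ev']] : exists c U, v = c :: U.
  by move: (eqv_size e1); rewrite Eu; case: {e1 e2 IH1 IH2} v => [|c U] // _; exists c, U.
have szU : size U = d by have := eqv_size e1; rewrite Eu Ev' => -[<-].
have posv : positive_word n (c :: U) by rewrite -Ev' -(eqv_positive e1).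
have va : valid_idx n (letter_idx a) by move: pos; rewrite Eu => /andP[].
have vb : valid_idx n (letter_idx b).
  by move: posv; rewrite -Ev' (eqv_positive e2) Ev => /andP[].
apply: (cube_step IH szU va vb posv (IH1 _ _ _ _ Eu Ev' szA pos)).
by apply: (IH2 _ _ _ _ Ev' Ev szU); rewrite Ev'.
Qed.

(** * Garside's element *)

Lemma compl_pair_sym n d u v u' v' :
  compl_pair n d u v u' v' -> compl_pair n d v u v' u'.
Proof.
move=> P C R bd e; rewrite (eqv_bounded_word _ e) in bd.
by have [D eR eC] := P _ _ bd (symmetry e); exists D.
Qed.

Lemma compl_pair_letter_all n d a b p q :
  compl a b = Some p -> compl b a = Some q -> compl_pair n d [:: a] [:: b] p q.
Proof. by apply: compl_pair_letter => d' _; apply: through_compl_all. Qed.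

Lemma compl_pair_commute n d u l :
  {in u, forall x, compl x l = Some [:: l] /\ compl l x = Some [:: x]} ->
  compl_pair n d u [:: l] [:: l] u.
Proof.
elim: u => [|x u IHu] comm; first exact: compl_pair_nill.
have [hx hl] := comm x (mem_head _ _).
apply: (compl_pair_catl (u1 := [:: x])) (compl_pair_letter_all hx hl) _.
by apply: IHu => y uy; apply: comm; rewrite inE uy orbT.
Qed.

Definition ascending m : seq letter := [seq Sg j | j <- iota 1 m].
Definition descending m : seq letter := [seq Sg j | j <- rev (iota 1 m)].

Definition sigma_word m (w : seq letter) : bool :=
  all (fun l => if l is Sg j then 0 < j <= m else false) w.

Lemma sigma_word_cat m u v : sigma_word m (u ++ v) = sigma_word m u && sigma_word m v.
Proof. exact: all_cat. Qed.

Lemma iota1S m : iota 1 m.+1 = rcons (iota 1 m) m.+1.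
Proof. by rewrite -cats1 -[in LHS](addn1 m) iotaD add1n. Qed.

Lemma ascendingS m : ascending m.+1 = ascending m ++ [:: Sg m.+1].
Proof. by rewrite /ascending iota1S map_rcons cats1. Qed.

Lemma descendingS m : descending m.+1 = Sg m.+1 :: descending m.
Proof. by rewrite /descending iota1S rev_rcons. Qed.

Lemma deltaS m : delta m.+2 = ascending m.+1 ++ delta m.+1.
Proof. by rewrite /delta !succnK iota1S rev_rcons. Qed.

Lemma sigma_word_ascending m : sigma_word m (ascending m).
Proof. by apply/allP=> x /mapP[j]; rewrite mem_iota => ? ->; lia. Qed.

Lemma sigma_word_descending m : sigma_word m (descending m).
Proof. by apply/allP=> x /mapP[j]; rewrite mem_rev mem_iota => ? ->; lia. Qed.

Lemma sigma_word_delta m : sigma_word m (delta m.+1).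
Proof.
elim: m => [//|m IHm]; rewrite deltaS sigma_word_cat sigma_word_ascending.
by apply: sub_all IHm => -[] // j; lia.
Qed.

Lemma compl_far m w k : sigma_word m w -> m.+1 < k ->
  {in w, forall x, compl x (Sg k) = Some [:: Sg k] /\ compl (Sg k) x = Some [:: x]}.
Proof.
move=> /allP sw lt_mk x /sw; case: x => // j jm /=.
have [ne na] : (j == k) = false /\ adj j k = false by rewrite /adj; split; apply/negbTE; lia.
by rewrite ne na eq_sym ne adjC na.
Qed.

Lemma compl_pair_delta n d k :
  exists v, compl_pair n d (delta k.+1) [:: Sg k.+1] (descending k.+1) v.
Proof.
elim: k => [|k [v IHk]]; first by exists [::]; apply: compl_pair_nill.
have row : compl_pair n d (ascending k.+1) [:: Sg k.+2]
    [:: Sg k.+2; Sg k.+1] (ascending k ++ [:: Sg k.+1; Sg k.+2]).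
  rewrite ascendingS; apply: compl_pair_catl (compl_pair_commute _) (compl_pair_letter_all _ _).
  - exact: compl_far (sigma_word_ascending k) (ltnSn _).
  - by rewrite /= (ltn_eqF (ltnSn _)) /adj eqxx.
  - by rewrite /= (gtn_eqF (ltnSn _)) /adj eqxx orbT.
have col : compl_pair n d (delta k.+1) [:: Sg k.+2; Sg k.+1] (Sg k.+2 :: descending k.+1) v.
  apply: (compl_pair_catr (v1 := [:: Sg k.+2]) (u1 := [:: Sg k.+2]) _ (compl_pair_sym IHk)).
  exact/compl_pair_commute/(compl_far (sigma_word_delta k)).
exists ((ascending k ++ [:: Sg k.+1; Sg k.+2]) ++ v).
by rewrite deltaS descendingS; apply: compl_pair_catl row col.
Qed.

Lemma eqv_cons_commute n l w : {in w, forall x, sb_equiv n [:: l; x] [:: x; l]} ->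
  sb_equiv n (l :: w) (w ++ [:: l]).
Proof.
elim: w => [|x w IHw] comm //=.
rewrite -[l :: x :: w]/([:: l; x] ++ w) (comm x (mem_head _ _)) /=.
by rewrite IHw // => y wy; apply: comm; rewrite inE wy orbT.
Qed.

Lemma eqv_commute_sigma n l j : valid_idx n (letter_idx l) -> valid_idx n j ->
  1 < ndist (letter_idx l) j -> sb_equiv n [:: l; Sg j] [:: Sg j; l].
Proof.
case: l => i /= hi hj d; apply: rel_eqv; first exact: R_ss.
by apply: R_xs; rewrite // neq_ltn d orbT.
Qed.

Lemma eqv_cons_far n m l w : sigma_word m w -> m.+1 < letter_idx l < n ->
  sb_equiv n (l :: w) (w ++ [:: l]).
Proof.
move=> /allP sw /andP[lo hi]; apply: eqv_cons_commute => x /sw; case: x => // j jm.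
by apply: eqv_commute_sigma; rewrite /valid_idx /ndist; lia.
Qed.

Lemma delta_descending n m : m.+2 <= n ->
  sb_equiv n (delta m.+2) (delta m.+1 ++ descending m.+1).
Proof.
elim: m => [//|m IHm] le_mn.
have comm : sb_equiv n (Sg m.+2 :: delta m.+1) (delta m.+1 ++ [:: Sg m.+2]).
  by apply: eqv_cons_far (sigma_word_delta m) _; rewrite /=; lia.
transitivity (ascending m.+2 ++ delta m.+1 ++ descending m.+1).
  by rewrite [delta m.+3]deltaS (IHm (ltnW le_mn)).
rewrite ascendingS -catA cat1s -cat_cons comm.
by rewrite [delta m.+2]deltaS [descending m.+2]descendingS -!catA.
Qed.

Definition left_divisible n u W : Prop := exists Z, sb_equiv n W (u ++ Z).

Lemma left_divisible_delta n W : positive_word n W ->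
  (forall i, 0 < i < n -> left_divisible n [:: Sg i] W) ->
  left_divisible n (delta n) W.
Proof.
case: n => [|n] posW div; first by exists W.
suff : forall k, k < n.+1 -> left_divisible n.+1 (delta k.+1) W by apply.
elim=> [|k IHk] lt_kn; first by exists W.
have [Z eZ] := IHk (ltnW lt_kn).
have [A eA] := div k.+1 lt_kn.
have [v P] := compl_pair_delta n.+1 (size W) k.
have bd : bounded_word n.+1 (size W) (delta k.+1 ++ Z).
  by rewrite -(eqv_bounded_word _ eZ) /bounded_word leqnn posW.
have [D eZD _] := P _ _ bd (E_trans (E_sym eZ) eA).
by exists D; rewrite eZ eZD catA -delta_descending.
Qed.

(** * Reversal and quasi-centrality of Delta *)

Lemma rel_rev n u v : sb_rel n u v -> sb_equiv n (rev u) (rev v).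
Proof.
case=> [i j hi hj d|i j hi hj d|i j hi hj d|i hi hj|i hi hj|i hi hj]; rewrite /rev /=.
- by apply/rel_eqv/R_ss; rewrite // ndistC.
- by apply/rel_eqv/R_xx; rewrite // ndistC.
- by symmetry; apply/rel_eqv/R_xs.
- exact/rel_eqv/R_braid.
- by symmetry; apply/rel_eqv/R_mix2.
- by symmetry; apply/rel_eqv/R_mix1.
Qed.

Lemma eqv_rev n u v : sb_equiv n u v -> sb_equiv n (rev u) (rev v).
Proof.
elim=> [//|p u' v' s r|w1 w2 _ IH|w1 w2 w3 _ IH1 _ IH2].
- by rewrite !rev_cat (rel_rev r).
- by symmetry.
- by rewrite IH1.
Qed.

Lemma rev_ascending m : rev (ascending m) = descending m.
Proof. by rewrite /ascending /descending map_rev. Qed.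

Lemma rev_delta n m : m <= n -> sb_equiv n (rev (delta m)) (delta m).
Proof.
elim: m => [//|[//|m] IHm] le_mn.
rewrite {1}deltaS rev_cat rev_ascending (IHm (ltnW le_mn)).
by rewrite (delta_descending le_mn).
Qed.

Lemma letter_idx_relabel f l : letter_idx (relabel f l) = f (letter_idx l).
Proof. by case: l. Qed.

Lemma relabel_relabel f g h l : f (g (letter_idx l)) = h (letter_idx l) ->
  relabel f (relabel g l) = relabel h l.
Proof. by case: l => i /= ->. Qed.

Lemma braid_shift_down n l i : letter_idx l = i.+1 -> valid_idx n i -> valid_idx n i.+1 ->
  sb_equiv n [:: l; Sg i; Sg i.+1] [:: Sg i; Sg i.+1; relabel predn l].
Proof.
by case: l => j /= -> hi hi1; symmetry; apply: rel_eqv; [apply: R_braid | apply: R_mix1].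
Qed.

Lemma braid_shift_up n l i : letter_idx l = i -> valid_idx n i -> valid_idx n i.+1 ->
  sb_equiv n [:: l; Sg i.+1; Sg i] [:: Sg i.+1; Sg i; relabel succn l].
Proof.
case: l => j /= -> hi hi1; first exact/rel_eqv/R_braid.
by symmetry; apply/rel_eqv/R_mix2.
Qed.

Lemma eqv_cons_ascending n l k M : letter_idx l = k.+2 -> k.+2 <= M < n ->
  sb_equiv n (l :: ascending M) (ascending M ++ [:: relabel predn l]).
Proof.
move=> Hl; elim: M => [|M IHM] /andP[le_kM lt_Mn]; first by [].
have Hl' : letter_idx (relabel predn l) = k.+1 by rewrite letter_idx_relabel Hl.
rewrite ascendingS; move: le_kM; rewrite leq_eqVlt => /orP[/eqP EM|lt_kM].
  case: EM => EM; subst M.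
  rewrite ascendingS -!catA -cat_cons (eqv_cons_far (sigma_word_ascending k));
    last by rewrite Hl; lia.
  by rewrite -catA !cat1s (braid_shift_down Hl) // /valid_idx; lia.
rewrite -cat_cons IHM; last lia.
rewrite -!catA !cat1s (eqv_commute_sigma (l := relabel predn l) (j := M.+1)) //.
all: by rewrite ?Hl' /valid_idx /ndist; lia.
Qed.

Lemma eqv_cons_descending n l k M : letter_idx l = k.+1 -> k.+2 <= M < n ->
  sb_equiv n (l :: descending M) (descending M ++ [:: relabel succn l]).
Proof.
move=> Hl; elim: M => [|M IHM] /andP[le_kM lt_Mn]; first by [].
have Hl' : letter_idx (relabel succn l) = k.+2 by rewrite letter_idx_relabel Hl.
rewrite descendingS; move: le_kM; rewrite leq_eqVlt => /orP[/eqP EM|lt_kM].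
  case: EM => EM; subst M.
  have [vk1 vk2] : valid_idx n k.+1 /\ valid_idx n k.+2 by rewrite /valid_idx; split; lia.
  rewrite descendingS -[l :: _]/([:: l; Sg k.+2; Sg k.+1] ++ descending k).
  rewrite (braid_shift_up Hl vk1 vk2) /=.
  by rewrite (eqv_cons_far (sigma_word_descending k)) // Hl'; lia.
rewrite -[l :: _]/([:: l; Sg M.+1] ++ descending M).
rewrite (eqv_commute_sigma (l := l) (j := M.+1)) /= ?IHM //.
all: by rewrite ?Hl /valid_idx /ndist; lia.
Qed.

Lemma eqv_cons_delta n k l : k.+2 <= n -> 0 < letter_idx l < k.+2 ->
  sb_equiv n (l :: delta k.+2) (delta k.+2 ++ [:: relabel (subn k.+2) l]).
Proof.
elim: k l => [|k IHk] l le_kn /andP[lo hi].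
  have idx1 : letter_idx l = 1 by lia.
  case: l idx1 {lo hi} => i /= -> //.
  by apply/rel_eqv/R_xs; rewrite /valid_idx /ndist; lia.
case: (ltngtP (letter_idx l) 1) => [|gt1|eq1]; first lia.
- have Hl : letter_idx l = (letter_idx l).-2.+2 by lia.
  rewrite [delta k.+3]deltaS -cat_cons (eqv_cons_ascending Hl); last lia.
  rewrite -catA cat1s (IHk _ (ltnW le_kn)); last by rewrite letter_idx_relabel; lia.
  by rewrite catA (@relabel_relabel _ _ (subn k.+3)) //; lia.
- rewrite (delta_descending le_kn) -cat_cons (IHk _ (ltnW le_kn)); last lia.
  rewrite -catA cat1s (eqv_cons_descending (k := k)) ?letter_idx_relabel; try lia.
  by rewrite catA -delta_descending // (@relabel_relabel _ _ (subn k.+3)) //; lia.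
Qed.

Lemma eqv_cat_delta n Y : positive_word n Y ->
  sb_equiv n (Y ++ delta n) (delta n ++ map (relabel (subn n)) Y).
Proof.
elim: Y => [|l Y IHY]; first by rewrite cats0.
rewrite positive_word_cons /valid_idx => /andP[vl posY].
suff e : sb_equiv n (l :: delta n) (delta n ++ [:: relabel (subn n) l]).
  by rewrite cat_cons IHY // -cat_cons e -catA.
have [k Ek] : exists k, n = k.+2 by exists n.-2; lia.
by rewrite Ek in vl *; apply: eqv_cons_delta; lia.
Qed.

Lemma left_divisible_rev n u W :
  left_divisible n u (rev W) <-> exists Z, sb_equiv n W (Z ++ rev u).
Proof.
split=> -[Z e]; exists (rev Z).
- by rewrite -[W]revK (eqv_rev e) rev_cat.
- by rewrite (eqv_rev e) rev_cat revK.
Qed.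

Theorem proposition2p4 (n : nat) (hn : 2 <= n) (W : seq letter)
    (hW : positive_word n W) :
  ((exists A : nat -> seq letter, forall i, 1 <= i <= n.-1 ->
       positive_word n (A i) /\ sb_equiv n W (Sg i :: A i))
   \/
   (exists B : nat -> seq letter, forall i, 1 <= i <= n.-1 ->
       positive_word n (B i) /\ sb_equiv n W (rcons (B i) (Sg i)))) ->
  exists Z : seq letter, positive_word n Z /\ sb_equiv n W (delta n ++ Z).
Proof.
have pos_parts u v : sb_equiv n W (u ++ v) -> positive_word n u && positive_word n v.
  by move=> e; rewrite -positive_word_cat -(eqv_positive e).
have range i : 0 < i < n -> 1 <= i <= n.-1 by lia.
case=> [[A HA]|[B HB]].
- have [Z eZ] : left_divisible n (delta n) W.
    by apply: left_divisible_delta hW _ => i /range /HA[_ e]; exists (A i).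
  by exists Z; case/andP: (pos_parts _ _ eZ).
- have [Z eZ] : exists Z, sb_equiv n W (Z ++ rev (delta n)).
    apply/left_divisible_rev/left_divisible_delta; first by rewrite /positive_word all_rev.
    by move=> i /range /HB[_ e]; apply/left_divisible_rev; exists (B i); rewrite -cats1 in e.
  have /andP[posZ _] := pos_parts _ _ eZ.
  have eW : sb_equiv n W (delta n ++ map (relabel (subn n)) Z).
    by rewrite eZ (rev_delta (leqnn n)) (eqv_cat_delta posZ).
  by exists (map (relabel (subn n)) Z); case/andP: (pos_parts _ _ eW).
Qed.
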